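(* First-order logic is closed under inverse morphisms of $\mathbb{T}$-algebras: for all alphabets $\Sigma,\Gamma$, every morphism $\varphi:\mathbb{T}\Sigma\to\mathbb{T}\Gamma$ of $\mathbb{T}$-algebras, and every $\mathrm{FO}$-definable language $K\subseteq\mathbb{T}_n\Gamma$, the language $\varphi^{-1}[K]$ is $\mathrm{FO}$-definable.
   Context: Sorts are $\omega$ (arities). For an alphabet (finite unordered $\omega$-sorted set) $\Sigma$ and $n<\omega$, $\mathbb{T}_n\Sigma$ is the set of finite or infinite trees with ordered successors labelled by elements of $\Sigma$ or variables $x_0,\dots,x_{n-1}$ (arity $0$), where a vertex with label in $\Sigma_k$ has exactly $k$ successors, variables label leaves only, each variable occurs at most once, and the root is labelled by an element of $\Sigma$. $\mathbb{T}$ is a monad with $\mathrm{sing}(a)=a(x_0,\dots,x_{k-1})$ for $a$ of arity $k$, and $\mathrm{flat}$ which, for a tree of trees, replaces each vertex $v$ by its label tree $T(v)$, connecting its $x_i$-leaf to the root of the tree replacing the $(i+1)$-st successor of $v$. A $\mathbb{T}$-algebra morphism $\varphi:\mathbb{T}\Sigma\to\mathbb{T}\Gamma$ is a sort-preserving map commuting with $\mathrm{flat}$ (equivalently determined by $\varphi\circ\mathrm{sing}:\Sigma\to\mathbb{T}\Gamma$). A tree $t\in\mathbb{T}_n\Sigma$ is identified with the structure $\langle\mathrm{dom}(t),\preceq,(S_i)_{i<\omega},(P_c)_{c\in\Sigma},(Q_i)_{i<n},R\rangle$ ($\preceq$ tree order with root least, $S_i$ $i$-th successor relation, $P_c$ vertices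 labelled $c$, $Q_i$ vertices labelled $x_i$, $R$ the root). $K\subseteq\mathbb{T}_n\Sigma$ is FO-definable if it is the set of trees in $\mathbb{T}_n\Sigma$ satisfying some first-order sentence over this signature. *)

From HB Require Import structures.
From mathcomp Require Import all_boot.

Set Implicit Arguments.
Unset Strict Implicit.
Unset Printing Implicit Defensive.

(* omega-sorted sets are given as a carrier A with an arity map ar.    *)
(* An alphabet is such a sorted set whose carrier is a finType.        *)
(* Vertices of trees are addresses (seq nat); the i-th successor       *)
(* (0-indexed, i.e. the (i+1)-st one) of v is rcons v i.               *)
(* A (raw) tree in T_n A is a partial labelling of addresses by        *)
(* elements of A or by variables x_0..x_{n-1} ('I_n).                  *)

Definition rtree (A : Type) (n : nat) := seq nat -> option (A + 'I_n).

Definition lar (A : Type) (ar : A -> nat) (n : nat) (l : A + 'I_n) : nat :=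
  match l with inl a => ar a | inr _ => 0 end.

Definition is_tree (A : Type) (ar : A -> nat) (n : nat) (t : rtree A n) : Prop :=
  (exists a, t [::] = Some (inl a)) /\
  (* domain prefix closed, a vertex labelled l has exactly (lar l)
     successors, namely the rcons v i with i < lar l *)
  (forall v i, t (rcons v i) <> None <-> exists l, t v = Some l /\ i < lar ar l) /\
  (forall v w (j : 'I_n), t v = Some (inr j) -> t w = Some (inr j) -> v = w).

Definition Tn (A : Type) (ar : A -> nat) (n : nat) := {t : rtree A n | is_tree ar t}.

Definition TA (A : Type) (ar : A -> nat) := {k : nat & Tn ar k}.
Definition TA_ar (A : Type) (ar : A -> nat) (s : TA ar) : nat := projT1 s.

(* A vertex of flat T is reached by walking: we are inside the label
   tree s = T(v) at a vertex u (labelled in A); moving to the i-th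
   successor of u either stays in s, or hits a leaf x_j of s, in which
   case we jump to the root of the label tree of the j-th successor of v
   in T (or to the variable x_m if that successor is labelled x_m). *)

Inductive fstate (n : nat) := FInside of seq nat & seq nat | FAtVar of 'I_n | FDead.

Definition flat_step (A : Type) (ar : A -> nat) (n : nat)
    (T : rtree (TA ar) n) (st : fstate n) (i : nat) : fstate n :=
  match st with
  | FInside v u =>
    match T v with
    | Some (inl s) =>
      match sval (projT2 s) (rcons u i) with
      | Some (inl _) => FInside n v (rcons u i)
      | Some (inr j) =>
        match T (rcons v (nat_of_ord j)) with
        | Some (inl _) => FInside n (rcons v (nat_of_ord j)) [::]
        | Some (inr m) => FAtVar m
        | None => FDead n
        end
      | None => FDead n
      end
    | _ => FDead n
    end
  | _ => FDead n
  end.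

Definition flat (A : Type) (ar : A -> nat) (n : nat) (T : rtree (TA ar) n) : rtree A n :=
  fun w =>
    match foldl (flat_step T) (FInside n [::] [::]) w with
    | FInside v u =>
      match T v with
      | Some (inl s) =>
        match sval (projT2 s) u with
        | Some (inl a) => Some (inl a)
        | _ => None
        end
      | _ => None
      end
    | FAtVar m => Some (inr m)
    | FDead => None
    end.

(* the functor T on a sort-preserving map phi : T A -> T B (relabelling) *)
Definition lift_sorted (A B : Type) (ar : A -> nat) (br : B -> nat)
    (phi : forall k, Tn ar k -> Tn br k) (s : TA ar) : TA br :=
  existT (fun k => Tn br k) (projT1 s) (phi (projT1 s) (projT2 s)).

Definition Tmap (A B : Type) (ar : A -> nat) (br : B -> nat)
    (phi : forall k, Tn ar k -> Tn br k) (n : nat) (T : rtree (TA ar) n)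
    : rtree (TA br) n :=
  fun w => match T w with
           | Some (inl s) => Some (inl (lift_sorted phi s))
           | Some (inr j) => Some (inr j)
           | None => None
           end.

(* The hypothesis H
   (that flat T is a tree, which always holds) is only used to form the
   element flat T of T_n A. *)
Definition talg_morph (A B : Type) (ar : A -> nat) (br : B -> nat)
    (phi : forall k, Tn ar k -> Tn br k) : Prop :=
  forall (n : nat) (T : Tn (@TA_ar A ar) n) (H : is_tree ar (flat (sval T))),
    sval (phi n (exist _ (flat (sval T)) H)) = flat (Tmap phi (sval T)).

(* signature: <=, S_i (i < omega), P_c (c in A), Q_i (i < n), R, and
   equality; first-order variables are natural numbers. *)

Inductive fo (A : Type) (n : nat) : Type :=
| FEq of nat & nat
| FLe of nat & nat
| FSucc of nat & nat & nat   (* FSucc i x y : y is the i-th successor of x *)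
| FLab of A & nat
| FVarl of 'I_n & nat
| FRoot of nat
| FFalse
| FImp of fo A n & fo A n
| FEx of nat & fo A n.

Fixpoint sat (A : Type) (n : nat) (t : rtree A n) (e : nat -> seq nat)
    (f : fo A n) : Prop :=
  match f with
  | FEq x y => e x = e y
  | FLe x y => prefix (e x) (e y)
  | FSucc i x y => e y = rcons (e x) i
  | FLab c x => t (e x) = Some (inl c)
  | FVarl j x => t (e x) = Some (inr j)
  | FRoot x => e x = [::]
  | FFalse => False
  | FImp f g => sat t e f -> sat t e g
  | FEx x f => exists v, t v <> None /\ sat t (fun y => if y == x then v else e y) f
  end.

Fixpoint free (A : Type) (n : nat) (x : nat) (f : fo A n) : bool :=
  match f with
  | FEq y z => (x == y) || (x == z)
  | FLe y z => (x == y) || (x == z)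
  | FSucc _ y z => (x == y) || (x == z)
  | FLab _ y => x == y
  | FVarl _ y => x == y
  | FRoot y => x == y
  | FFalse => false
  | FImp f g => free x f || free x g
  | FEx y f => (x != y) && free x f
  end.

Definition sentence (A : Type) (n : nat) (f : fo A n) : Prop := forall x, ~~ free x f.

Definition fo_definable (A : Type) (ar : A -> nat) (n : nat) (K : Tn ar n -> Prop) : Prop :=
  exists f : fo A n, sentence f /\
    forall t : Tn ar n, K t <-> sat (sval t) (fun _ => [::]) f.

(* Let f be a sentence defining K, with variables and successor indices below N and of
   quantifier rank q.  Every vertex of phi t = flat (T phi (T sing t)) is a pair (v, u) of
   a vertex v of t and a vertex u of the label tree phi (sing (t v)).  Equality, prefix
   order, successors, labels and the root of such pairs are determined by the atomic facts
   of the v's in t, in a signature enriched by two definable predicates ("y lies below the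
   j-th child of x" and "every edge above x is matched by a variable occurrence"), together
   with the u's themselves.  A back-and-forth induction, keeping the u's fixed, shows that the
   rank-q type of a tuple of t determines the rank-q type of the corresponding tuple of phi t.
   Hence whether phi t lies in K depends only on the rank-q type of t at the root, of which
   there are finitely many, and phi^-1[K] is defined by the disjunction of the Hintikka
   formulas of the good types. *)

From mathcomp Require Import boolp.
From mathcomp Require Import all_boot.

Set Implicit Arguments.
Unset Strict Implicit.
Unset Printing Implicit Defensive.

Definition upd (e : nat -> seq nat) (x : nat) (v : seq nat) : nat -> seq nat :=
  fun y => if y == x then v else e y.

(** * First-order formulas *)

Section Connectives.
Variables (A : Type) (n : nat).
Implicit Types (f g : fo A n) (t : rtree A n) (e : nat -> seq nat).

Definition fneg f := FImp f (FFalse A n).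
Definition fconj f g := fneg (FImp f (fneg g)).
Definition fdisj f g := FImp (fneg f) g.
Definition fall x f := fneg (FEx x (fneg f)).
Definition bigconj (l : seq (fo A n)) := foldr fconj (fneg (FFalse A n)) l.
Definition bigdisj (l : seq (fo A n)) := foldr fdisj (FFalse A n) l.

Lemma sat_conj t e f g : sat t e (fconj f g) <-> sat t e f /\ sat t e g.
Proof.
split=> [fg | [Hf Hg] /(_ Hf)]; last exact.
by split; apply: contrapT => nH; apply: fg => // Hf; case: nH.
Qed.

Lemma sat_disj t e f g : sat t e (fdisj f g) <-> sat t e f \/ sat t e g.
Proof.
split=> [fg | [Hf nHf | Hg _] //]; last by case: nHf.
by case: (pselect (sat t e f)) => Hf; [left | right; apply: fg].
Qed.

Lemma sat_ex t e x f :
  sat t e (FEx x f) <-> exists2 v, t v <> None & sat t (upd e x v) f.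
Proof. by split=> [[v []] | [v]]; exists v. Qed.

Lemma sat_all t e x f :
  sat t e (fall x f) <-> forall v, t v <> None -> sat t (upd e x v) f.
Proof.
split=> [nex v tv | Hall [v [tv nf]]]; last exact: nf (Hall v tv).
by apply: contrapT => nH; apply: nex; exists v.
Qed.

Lemma sat_bigconj t e (I : eqType) (s : seq I) (F : I -> fo A n) :
  sat t e (bigconj (map F s)) <-> forall i, i \in s -> sat t e (F i).
Proof.
elim: s => [|i s IH]; first by split=> // _.
apply: iff_trans (sat_conj _ _ _ _) _; rewrite IH; split=> [[Hi Hs] j | H].
  by rewrite inE => /predU1P [-> //| /Hs].
by split=> [|j js]; apply: H; rewrite inE ?eqxx ?js ?orbT.
Qed.

Lemma sat_bigdisj t e (I : eqType) (s : seq I) (F : I -> fo A n) :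
  sat t e (bigdisj (map F s)) <-> exists2 i, i \in s & sat t e (F i).
Proof.
elim: s => [|i s IH]; first by split=> // [[]].
apply: iff_trans (sat_disj _ _ _ _) _; rewrite IH; split=> [[Hi | [j js Hj]] | [j]].
- by exists i; rewrite ?mem_head.
- by exists j; rewrite // inE js orbT.
- by rewrite inE => /predU1P [-> | js] Hj; [left | right; exists j].
Qed.

Fixpoint bind_root (k : nat) (g : fo A n) : fo A n :=
  match k with 0 => g | k'.+1 => FEx k' (fconj (FRoot A n k') (bind_root k' g)) end.

Lemma free_bind_root k (g : fo A n) y :
  free y (bind_root k g) -> free y g /\ k <= y.
Proof.
elim: k => [|k IH] //=; rewrite orbF => /andP [yk /orP [/eqP yk' | ]].
  by rewrite yk' eqxx in yk.
by rewrite orbF => /IH [gy ky]; split; rewrite // ltn_neqAle eq_sym yk.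
Qed.

Lemma sat_bind_root (t : rtree A n) k g : t [::] <> None ->
  sat t (fun=> [::]) (bind_root k g) <-> sat t (fun=> [::]) g.
Proof.
have upd_nil x : upd (fun=> [::]) x [::] = fun=> [::].
  by apply: funext => y; rewrite /upd; case: eqP.
move=> troot; elim: k => [|k IH] //; apply: iff_trans (sat_ex _ _ _ _) _.
split=> [[v _ /sat_conj [/= vnil]] | Hg].
  by rewrite /upd eqxx in vnil; rewrite vnil upd_nil IH.
by exists [::] => //; apply/sat_conj; rewrite upd_nil; split=> //; apply/IH.
Qed.

Definition fv_lt (N : nat) f := forall y, free y f -> y < N.

Lemma fv_lt_neg N f : fv_lt N f -> fv_lt N (fneg f).
Proof. by move=> H y /= /orP [/H|]. Qed.

Lemma fv_lt_conj N f g : fv_lt N f -> fv_lt N g -> fv_lt N (fconj f g).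
Proof. by move=> Hf Hg y /= /orP [/orP [/Hf|/orP[/Hg|]]|]. Qed.

Lemma fv_lt_bigconj N (I : Type) (s : seq I) (F : I -> fo A n) :
  (forall i, fv_lt N (F i)) -> fv_lt N (bigconj (map F s)).
Proof. by move=> H; elim: s => [|i s IH] //=; apply: fv_lt_conj. Qed.

Lemma fv_lt_bigdisj N (I : Type) (s : seq I) (F : I -> fo A n) :
  (forall i, fv_lt N (F i)) -> fv_lt N (bigdisj (map F s)).
Proof. by move=> H; elim: s => [|i s IH] // y /= /orP [/orP [/H|]|/IH]. Qed.

Lemma fv_lt_ex N f : fv_lt N.+1 f -> fv_lt N (FEx N f).
Proof. by move=> Hf y /= /andP [yN /Hf]; rewrite ltnS leq_eqVlt (negPf yN). Qed.

End Connectives.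

(** * Quantifier-rank types *)

Fixpoint qtype (A0 : finType) (N q : nat) : finType :=
  match q with
  | 0 => A0
  | q'.+1 => (A0 * {ffun 'I_N -> {set qtype A0 N q'}})%type
  end.

Definition qtype_atom (A0 : finType) (N q : nat) : qtype A0 N q -> A0 :=
  match q return qtype A0 N q -> A0 with 0 => id | _.+1 => fst end.

Section QueryTypes.
Variables (X : Type) (n : nat) (I : finType) (query : I -> fo X n) (N : nat).
Implicit Types (f : fo X n) (t : rtree X n) (e : nat -> seq nat).

Local Notation atype := {ffun I -> bool}.

Definition atp t e : atype := [ffun i => `[< sat t e (query i) >]].

Fixpoint tp t q e : qtype atype N q :=
  match q return qtype atype N q with
  | 0 => atp t e
  | q'.+1 => (atp t e, [ffun x : 'I_N =>
      [set tau | `[< exists2 v, t v <> None & tp t q' (upd e x v) = tau >]]])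
  end.

Lemma atp_sat_iff t t' e e' i : atp t e = atp t' e' ->
  sat t e (query i) <-> sat t' e' (query i).
Proof. by move=> /ffunP /(_ i); rewrite !ffunE; apply: asbool_eq_equiv. Qed.

Lemma atp_sat_eq t t' e e' : atp t e = atp t' e' ->
  (fun i => sat t e (query i)) = (fun i => sat t' e' (query i)).
Proof. by move=> E; apply: funext => i; apply/propext/atp_sat_iff. Qed.

Lemma tp_atom t q e : qtype_atom (tp t q e) = atp t e.
Proof. by case: q. Qed.

Lemma tp_back_forth t t' q e e' (x : 'I_N) v :
  tp t q.+1 e = tp t' q.+1 e' -> t v <> None ->
  exists2 v', t' v' <> None & tp t' q (upd e' x v') = tp t q (upd e x v).
Proof.
case=> _ /ffunP /(_ x) /setP /(_ (tp t q (upd e x v))).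
rewrite /= !ffunE !inE => E tv; have [ext_t _] := asbool_eq_equiv E.
by apply: ext_t; exists v.
Qed.

Definition lit (b : bool) f := if b then f else fneg f.

Definition atp_formula (a : atype) : fo X n :=
  bigconj [seq lit (a i) (query i) | i <- enum I].

Lemma sat_atp_formula t e a : sat t e (atp_formula a) <-> atp t e = a.
Proof.
rewrite sat_bigconj; split=> [Ha | <- i _]; last first.
  by rewrite ffunE; case: asboolP.
apply/ffunP => i; rewrite ffunE; have := Ha i; rewrite mem_enum.
by case: (a i) => /(_ isT) H; [apply/asboolP | apply/asboolPn].
Qed.

Fixpoint hintikka q : qtype atype N q -> fo X n :=
  match q return qtype atype N q -> fo X n with
  | 0 => atp_formula
  | q'.+1 => fun tau =>
      fconj (atp_formula tau.1)
        (bigconj [seq fconj (bigconj [seq FEx x (hintikka sg) | sg <- enum (tau.2 x)])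
                          (fall x (bigdisj [seq hintikka sg | sg <- enum (tau.2 x)]))
                | x : 'I_N <- enum 'I_N])
  end.

Lemma sat_hintikka t q (tau : qtype atype N q) e :
  sat t e (hintikka tau) <-> tp t q e = tau.
Proof.
elim: q tau e => [|q IH] tau e; first exact: sat_atp_formula.
case: tau => a S.
apply: iff_trans (sat_conj _ _ _ _) _; rewrite sat_atp_formula sat_bigconj.
pose ext (x : 'I_N) := [set tau | `[< exists2 v, t v <> None & tp t q (upd e x v) = tau >]].
suff ext_hintikka (x : 'I_N) :
    sat t e (fconj (bigconj [seq FEx x (hintikka sg) | sg <- enum (S x)])
                   (fall x (bigdisj [seq hintikka sg | sg <- enum (S x)])))
    <-> ext x = S x.
  have -> : tp t q.+1 e = (atp t e, [ffun x => ext x]) by [].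
  split=> [[-> H] | [-> ES]]; last by split=> // x _; apply/ext_hintikka; rewrite -ES ffunE.
  by congr pair; apply/ffunP => x; rewrite ffunE; apply/ext_hintikka/H; rewrite mem_enum.
rewrite sat_conj sat_bigconj sat_all; split=> [[Hex Hall] | <-].
  apply/setP => sg; rewrite inE; apply/asboolP/idP => [[v tv <-] | ].
    by have /sat_bigdisj [sg'] := Hall v tv; rewrite IH => + ->; rewrite mem_enum.
  by rewrite -mem_enum => /Hex [v [tv /IH]]; exists v.
split=> [sg | v tv].
  by rewrite mem_enum inE => /asboolP [v tv Ev]; exists v; split=> //; apply/IH.
apply/sat_bigdisj; exists (tp t q (upd e x v)); last exact/IH.
by rewrite mem_enum inE; apply/asboolP; exists v.
Qed.

Lemma fv_lt_hintikka q (tau : qtype atype N q) :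
  (forall i, fv_lt N (query i)) -> fv_lt N (hintikka tau).
Proof.
move=> Hq; have fv_atp a : fv_lt N (atp_formula a).
  by apply: fv_lt_bigconj => i; case: (a i); [exact: Hq | exact/fv_lt_neg/Hq].
elim: q tau => [|q IH] tau //=.
apply: fv_lt_conj => //; apply: fv_lt_bigconj => x; apply: fv_lt_conj.
  by apply: fv_lt_bigconj => sg y /= /andP [_ /IH].
by apply/fv_lt_neg => y /= /andP [_]; apply/fv_lt_neg/fv_lt_bigdisj.
Qed.

Fixpoint over_queries f : Prop :=
  match f with
  | FFalse => True
  | FImp f g => over_queries f /\ over_queries g
  | FEx x g => x < N /\ over_queries g
  | _ => exists i, query i = f
  end.

Fixpoint qrank f : nat :=
  match f with
  | FImp f g => maxn (qrank f) (qrank g)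
  | FEx _ g => (qrank g).+1
  | _ => 0
  end.

Lemma sat_tp_eq f q t t' e e' : over_queries f -> qrank f <= q ->
  tp t q e = tp t' q e' -> sat t e f <-> sat t' e' f.
Proof.
elim: f q t t' e e' => [x y|x y|i x y|c x|j x|x||f IHf g IHg|x g IHg] q t t' e e'.
1-6: by move=> [k <-] _ /(congr1 (@qtype_atom _ _ _)); rewrite !tp_atom; apply: atp_sat_iff.
- by [].
- move=> /= [Of Og]; rewrite geq_max => /andP [qf qg] E.
  by rewrite (IHf q t t' e e') ?(IHg q t t' e e').
case: q => // q [/= xN Og] qg.
have ex_tp t1 t1' e1 e1' :
    tp t1 q.+1 e1 = tp t1' q.+1 e1' -> sat t1 e1 (FEx x g) -> sat t1' e1' (FEx x g).
  move=> E [v [tv Hv]]; have [v' tv' Ev'] := tp_back_forth (Ordinal xN) E tv.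
  by exists v'; split=> //; apply/(IHg q t1 t1' (upd e1 x v)).
by move=> E; split; apply: ex_tp.
Qed.

End QueryTypes.

Fixpoint fo_bound (A : Type) n (f : fo A n) : nat :=
  match f with
  | FEq x y | FLe x y => maxn x y
  | FSucc i x y => maxn i (maxn x y)
  | FLab _ x | FVarl _ x | FRoot x => x
  | FFalse => 0
  | FImp f g => maxn (fo_bound f) (fo_bound g)
  | FEx x g => maxn x (fo_bound g)
  end.

Section AtomQueries.
Variables (X : finType) (n N B : nat).

Definition atom_index : finType :=
  ('I_N * 'I_N + 'I_N * 'I_N + 'I_B * 'I_N * 'I_N + 'I_N * X + 'I_N * 'I_n + 'I_N)%type.

Definition atom_query (i : atom_index) : fo X n :=
  match i with
  | inl (inl (inl (inl (inl (x, y))))) => FEq X n x y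
  | inl (inl (inl (inl (inr (x, y))))) => FLe X n x y
  | inl (inl (inl (inr (j, x, y)))) => FSucc X n j x y
  | inl (inl (inr (x, c))) => FLab n c x
  | inl (inr (x, m)) => FVarl X m x
  | inr x => FRoot X n x
  end.

Lemma fv_lt_atom_query i : fv_lt N (atom_query i).
Proof.
case: i => [[[[[[x y]|[x y]]|[[j x] y]]|[x c]]|[x m]]|x] z /=;
  by rewrite ?orbF; try case/orP; move/eqP ->.
Qed.

End AtomQueries.

Lemma over_atom_queries (X : finType) n N B (f : fo X n) :
  fo_bound f < N -> fo_bound f < B -> over_queries (@atom_query X n N B) N f.
Proof.
elim: f => [x y|x y|i x y|c x|j x|x||f IHf g IHg|x g IHg] /=; rewrite ?gtn_max.
- by case/andP=> xN yN _; exists (inl (inl (inl (inl (inl (Ordinal xN, Ordinal yN)))))).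
- by case/andP=> xN yN _; exists (inl (inl (inl (inl (inr (Ordinal xN, Ordinal yN)))))).
- case/and3P=> _ xN yN /andP [iB _].
  by exists (inl (inl (inl (inr (Ordinal iB, Ordinal xN, Ordinal yN))))).
- by move=> xN _; exists (inl (inl (inr (Ordinal xN, c)))).
- by move=> xN _; exists (inl (inr (Ordinal xN, j))).
- by move=> xN _; exists (inr (Ordinal xN)).
- by [].
- by case/andP=> fN gN /andP [fB gB]; split; [apply: IHf | apply: IHg].
- by case/andP=> xN gN /andP [_ gB]; split; last apply: IHg.
Qed.

(** * Trees *)

Lemma prefix_rcons_inv (p v : seq nat) j :
  prefix p (rcons v j) -> p = rcons v j \/ prefix p v.
Proof.
case/prefixP=> s; elim/last_ind: s => [|s k _]; first by rewrite cats0; left.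
by rewrite -rcons_cat => /rcons_inj [-> _]; right; apply: prefix_prefix.
Qed.

Section TreeFacts.
Variables (A : Type) (ar : A -> nat) (n : nat) (t : rtree A n).
Hypothesis t_tree : is_tree ar t.

Lemma tree_root : exists a, t [::] = Some (inl a).
Proof. by case: t_tree. Qed.

Lemma tree_rcons_parent v i :
  t (rcons v i) <> None -> exists2 a, t v = Some (inl a) & i < ar a.
Proof. by case: t_tree => _ [/(_ v i) [+ _] _] => /[apply] [[[a|j] [-> ?]]] //; exists a. Qed.

Lemma tree_rcons_child v i a : t v = Some (inl a) -> i < ar a -> t (rcons v i) <> None.
Proof. by case: t_tree => _ [/(_ v i) [_ H] _] tv ia; apply: H; exists (inl a). Qed.

Lemma tree_var_uniq v w j : t v = Some (inr j) -> t w = Some (inr j) -> v = w.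
Proof. by case: t_tree => _ [_]; apply. Qed.

Lemma tree_prefix_closed p w : t w <> None -> prefix p w -> t p <> None.
Proof.
move=> tw /prefixP [s Es]; subst w; elim/last_ind: s tw => [|s i IH]; first by rewrite cats0.
by rewrite -rcons_cat => /tree_rcons_parent [a ta _]; apply: IH; rewrite ta.
Qed.

Lemma tree_var_leaf p w j : t p = Some (inr j) -> prefix p w -> t w <> None -> p = w.
Proof.
move=> tp /prefixP [[|c s] ->]; first by rewrite cats0.
move=> tw; have /tree_rcons_parent [a] : t (rcons p c) <> None.
  by apply: (tree_prefix_closed tw); rewrite -cats1 -(cat1s c s) catA prefix_prefix.
by rewrite tp.
Qed.

End TreeFacts.

Lemma fo_definable_of_tp (X : Type) (ar : X -> nat) n (I : finType) (query : I -> fo X n)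
    N q (P : Tn ar n -> Prop) :
  (forall i, fv_lt N (query i)) ->
  (forall t t' : Tn ar n,
     tp query N (sval t) q (fun=> [::]) = tp query N (sval t') q (fun=> [::]) -> P t -> P t') ->
  fo_definable P.
Proof.
move=> fv_query P_tp; pose e0 : nat -> seq nat := fun=> [::].
pose good := [set tau | `[< exists2 t : Tn ar n, tp query N (sval t) q e0 = tau & P t >]].
exists (bind_root N (bigdisj [seq hintikka query tau | tau <- enum good])); split.
  move=> y; apply/negP => /free_bind_root [+ Ny]; rewrite leqNgt in Ny.
  by apply/negP; apply: contraNN Ny; apply: fv_lt_bigdisj => tau; apply: fv_lt_hintikka.
move=> t; have [a ta] := tree_root (proj2_sig t).
rewrite sat_bind_root ?ta // sat_bigdisj; split=> [Pt | [tau]].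
  exists (tp query N (sval t) q e0); last exact/sat_hintikka.
  by rewrite mem_enum inE; apply/asboolP; exists t.
by rewrite mem_enum inE => /asboolP [t0 <- Pt0] /sat_hintikka /esym /P_tp; apply.
Qed.

Section Sing.
Variables (Sigma : Type) (arS : Sigma -> nat).

Definition sing_rtree (a : Sigma) : rtree Sigma (arS a) := fun p =>
  match p with
  | [::] => Some (inl a)
  | [:: i] => if insub i is Some j then Some (inr j) else None
  | _ => None
  end.

Lemma sing_is_tree a : is_tree arS (sing_rtree a).
Proof.
split; first by exists a.
split=> [[|x [|y v]] i /= | [|x [|y v]] [|x' [|y' w]] j //=].
- case: insubP => [j ai _|/negPf ai]; split=> //; first by exists (inl a).
  by case=> l [[<-]]; rewrite /= ai.
- by case: insubP => [j _ _|_]; split=> // [[[c|k] []]].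
- by split=> // [[l []]].
- case: insubP => // k _ Ek [<-]; case: insubP => // k' _ Ek' [Ekk'].
  by congr [:: _]; rewrite -Ek -Ek' Ekk'.
Qed.

Definition sing a : Tn arS (arS a) := exist _ (sing_rtree a) (sing_is_tree a).

End Sing.

(** * The vertices of [phi t] *)

Section Walk.
Variables (Sigma Gamma : finType) (arS : Sigma -> nat) (arG : Gamma -> nat).
Variables (phi : forall k, Tn arS k -> Tn arG k) (n : nat).

Definition phi_sing (a : Sigma) : rtree Gamma (arS a) := sval (phi (sing arS a)).

Lemma phi_sing_tree a : is_tree arG (phi_sing a).
Proof. exact: proj2_sig. Qed.

Lemma phi_sing_root a : exists g, phi_sing a [::] = Some (inl g).
Proof. exact: tree_root (phi_sing_tree a). Qed.

Definition occurs (a : Sigma) (j : nat) :=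
  exists p (k : 'I_(arS a)), k = j :> nat /\ phi_sing a p = Some (inr k).

Definition Tsing (t : rtree Sigma n) : rtree (TA arS) n := fun v =>
  match t v with
  | Some (inl a) => Some (inl (existT _ (arS a) (sing arS a)))
  | Some (inr j) => Some (inr j)
  | None => None
  end.

Definition Tphi (t : rtree Sigma n) : rtree (TA arG) n := Tmap phi (Tsing t).

Section FlatTsing.
Variables (t : rtree Sigma n) (t_tree : is_tree arS t).

Lemma Tsing_tree : is_tree (@TA_ar Sigma arS) (Tsing t).
Proof.
have [a ta] := tree_root t_tree.
split; first by exists (existT _ (arS a) (sing arS a)); rewrite /Tsing ta.
split=> [v i | v w j]; rewrite /Tsing.
  split=> [tvi | [l []]].
    have /(tree_rcons_parent t_tree) [b -> bi] : t (rcons v i) <> None.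
      by move: tvi; case: (t (rcons v i)).
    by exists (inl (existT _ (arS b) (sing arS b))).
  case tv: (t v) => [[b|m]|] // [<-] //= /(tree_rcons_child t_tree tv).
  by case: (t (rcons v i)) => [[]|].
case tv: (t v) => [[a'|m]|] //; case tw: (t w) => [[b|m']|] // [<-] [Em].
by apply: (tree_var_uniq t_tree tv); rewrite tw Em.
Qed.

Lemma walk_Tsing w : foldl (flat_step (Tsing t)) (FInside n [::] [::]) w =
  match t w with
  | Some (inl _) => FInside n w [::]
  | Some (inr m) => FAtVar m
  | None => FDead n
  end.
Proof.
elim/last_ind: w => [|w i IH]; first by have [a ->] := tree_root t_tree.
rewrite foldl_rcons IH.
have no_child : (forall a, t w = Some (inl a) -> ~~ (i < arS a)) -> t (rcons w i) = None.
  move=> H; case twi: (t (rcons w i)) => // [l].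
  have /(tree_rcons_parent t_tree) [a /H /negP] : t (rcons w i) <> None by rewrite twi.
  by [].
case tw: (t w) => [[a|m]|]; last 2 first.
- by rewrite no_child // => a; rewrite tw.
- by rewrite no_child // => a; rewrite tw.
rewrite /flat_step /Tsing tw /= /sing_rtree /=.
case: insubP => [j _ -> | ai]; first by case: (t (rcons w i)) => [[]|].
by rewrite no_child // => a'; rewrite tw => -[<-].
Qed.

Lemma flat_Tsing : flat (Tsing t) = t.
Proof.
apply: funext => w; rewrite /flat walk_Tsing.
by case tw: (t w) => [[]|] //; rewrite /Tsing tw.
Qed.

End FlatTsing.

(* t = flat (T sing t), and phi commutes with flat. *)
Lemma phi_flat (morph : talg_morph phi) (t : Tn arS n) :
  sval (phi t) = flat (Tphi (sval t)).
Proof.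
case: t => t t_tree /=.
have flat_tree : is_tree arS (flat (sval (exist _ _ (Tsing_tree t_tree) : Tn _ n))).
  by rewrite /= flat_Tsing.
rewrite /Tphi -(morph n _ flat_tree); congr (sval (phi _)).
move: flat_tree; rewrite /= (flat_Tsing t_tree) => flat_tree.
by rewrite (Prop_irrelevance flat_tree t_tree).
Qed.

Section Addresses.
Variables (t : rtree Sigma n) (t_tree : is_tree arS t).

Definition state_at v u : fstate n :=
  match t v with
  | Some (inl _) => FInside n v u
  | Some (inr m) => FAtVar m
  | None => FDead n
  end.

Definition step := flat_step (Tphi t).

Definition walk w := foldl step (FInside n [::] [::]) w.

(* A branch of t survives in phi t only if each of its edges v0 -> rcons v0 j is matched
   by an occurrence of the variable x_j in phi (sing (t v0)). *)
Definition alive v :=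
  forall v0 j, prefix (rcons v0 j) v -> forall a, t v0 = Some (inl a) -> occurs a j.

(* The vertices of flat (Tphi t) correspond, through walk, to the states state_at v u
   of the valid pairs (v, u). *)
Definition valid v u := alive v /\
  match t v with
  | Some (inl a) => exists g, phi_sing a u = Some (inl g)
  | Some (inr _) => u = [::]
  | None => False
  end.

Lemma step_inside v u i : step (FInside n v u) i =
  match t v with
  | Some (inl a) =>
    match phi_sing a (rcons u i) with
    | Some (inl _) => FInside n v (rcons u i)
    | Some (inr j) => state_at (rcons v j) [::]
    | None => FDead n
    end
  | _ => FDead n
  end.
Proof.
rewrite /step /flat_step /Tphi /Tmap /Tsing /state_at; case: (t v) => [[a|m]|] //=.
rewrite /phi_sing; case: (sval (phi (sing arS a)) (rcons u i)) => [[g|j]|] //=.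
by case: (t (rcons v j)) => [[b|m]|].
Qed.

Lemma step_dead X i : (forall v u, X <> FInside n v u) -> step X i = FDead n.
Proof. by case: X => // v u /(_ v u). Qed.

Lemma foldl_step_dead r : foldl step (FDead n) r = FDead n.
Proof. by elim: r. Qed.

Lemma walk_rcons w i : walk (rcons w i) = step (walk w) i.
Proof. by rewrite /walk foldl_rcons. Qed.

Lemma walk_cat w r : walk (w ++ r) = foldl step (walk w) r.
Proof. by rewrite /walk foldl_cat. Qed.

Lemma alive_nil : alive [::].
Proof. by move=> v0 j; rewrite prefixs0; case: v0. Qed.

Lemma alive_prefix p v : prefix p v -> alive v -> alive p.
Proof. by move=> pv Av v0 j vjp; apply: Av; apply: prefix_trans vjp pv. Qed.

Lemma alive_rcons v a (j : 'I_(arS a)) p : t v = Some (inl a) -> alive v ->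
  phi_sing a p = Some (inr j) -> alive (rcons v j).
Proof.
move=> tv Av pj v0 j0 /prefix_rcons_inv [/rcons_inj [-> ->] b | /Av //].
by rewrite tv => -[<-]; exists p, j.
Qed.

Lemma valid_dom v u : valid v u -> t v <> None.
Proof. by case=> _; case: (t v). Qed.

Lemma valid_state_live v u : valid v u -> state_at v u <> FDead n.
Proof. by rewrite /valid /state_at; case: (t v) => [[a|m]|] []. Qed.

Lemma valid_nil : valid [::] [::].
Proof.
have [a ta] := tree_root t_tree.
by split; [exact: alive_nil | rewrite ta; exact: phi_sing_root].
Qed.

Lemma walk_nil : walk [::] = state_at [::] [::].
Proof. by have [a ta] := tree_root t_tree; rewrite /state_at ta. Qed.

Lemma valid_rcons_var v a u i j : t v = Some (inl a) -> valid v u ->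
  phi_sing a (rcons u i) = Some (inr j) ->
  state_at (rcons v j) [::] <> FDead n -> valid (rcons v j) [::].
Proof.
move=> tv [Av _] uij; rewrite /state_at /valid.
case: (t (rcons v j)) => [[b|m]|] // _; split=> //; try exact: alive_rcons tv Av uij.
exact: phi_sing_root.
Qed.

Lemma step_valid v u i : valid v u -> step (state_at v u) i <> FDead n ->
  exists v' u', step (state_at v u) i = state_at v' u' /\ valid v' u'.
Proof.
move=> Vvu; rewrite {1 2}/state_at.
case tv: (t v) => [[a|m]|] //; rewrite step_inside tv.
case ui: (phi_sing a (rcons u i)) => [[g|j]|] // live.
  exists v, (rcons u i); rewrite /state_at /valid tv; split=> //.
  by split; [case: Vvu | exists g].
by exists (rcons v j), [::]; split=> //; apply: valid_rcons_var tv Vvu ui live.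
Qed.

Lemma walk_valid w : walk w <> FDead n -> exists v u, walk w = state_at v u /\ valid v u.
Proof.
elim/last_ind: w => [|w i IH].
  by exists [::], [::]; rewrite walk_nil; split=> //; apply: valid_nil.
rewrite walk_rcons => live.
have [v [u [wvu Vvu]]] : exists v u, walk w = state_at v u /\ valid v u.
  by apply: IH => wd; apply: live; rewrite wd.
by rewrite wvu in live *; apply: step_valid.
Qed.

Lemma state_at_inj_vertex v u v' u' :
  state_at v u = state_at v' u' -> state_at v u <> FDead n -> v = v'.
Proof.
rewrite /state_at; case tv: (t v) => [[a|m]|]; case tv': (t v') => [[a'|m']|] //.
  by case.
by case=> mm' _; apply: (tree_var_uniq t_tree tv); rewrite tv' mm'.
Qed.

Lemma state_at_inj v u v' u' : valid v u -> valid v' u' ->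
  state_at v u = state_at v' u' -> v = v' /\ u = u'.
Proof.
move=> Vvu Vvu' E; have vv' := state_at_inj_vertex E (valid_state_live Vvu).
subst v'; split=> //; move: Vvu Vvu' E; rewrite /valid /state_at.
by case: (t v) => [[a|m]|] [_ +] [_ +] //= => [_ _ [] | -> ->].
Qed.

Lemma step_live v u i : step (state_at v u) i <> FDead n -> exists a, t v = Some (inl a).
Proof. by rewrite /state_at; case: (t v) => [[a|m]|] //; exists a. Qed.

Lemma step_inj v u v' u' i i' :
  step (state_at v u) i = step (state_at v' u') i' -> step (state_at v u) i <> FDead n ->
  [/\ v = v', u = u' & i = i'].
Proof.
move=> E live.
have [a tv] := step_live live.
have [a' tv'] : exists a', t v' = Some (inl a').
  by apply: (step_live (u := u') (i := i')); rewrite -E.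
rewrite /state_at tv tv' !step_inside tv tv' in E live.
move: E live; rewrite /state_at.
case ui: (phi_sing a (rcons u i)) => [[g|j]|];
  case ui': (phi_sing a' (rcons u' i')) => [[g'|j']|] //.
- by case=> -> /rcons_inj [-> ->].
- by case: (t (rcons v' j')) => [[b|m]|] // [_]; case: (u).
- by case: (t (rcons v j)) => [[b|m]|] // [_]; case: (u').
move=> E /(state_at_inj_vertex E) /rcons_inj [vv' jj']; subst v'.
move: tv'; rewrite tv => -[aa']; subst a'.
have jj'' : j = j' by apply: val_inj.
by subst j'; have [-> ->] := rcons_inj (tree_var_uniq (phi_sing_tree a) ui ui').
Qed.

Lemma step_not_root v u i : step (state_at v u) i <> FInside n [::] [::].
Proof.
rewrite /state_at; case tv: (t v) => [[a|m]|] //; rewrite step_inside tv.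
case: (phi_sing a (rcons u i)) => [[g|j]|] //; first by case; case: (u).
by rewrite /state_at; case: (t (rcons v j)) => [[b|m]|] //; case; case: (v).
Qed.

Lemma walk_eq_nil w : walk w = FInside n [::] [::] -> w = [::].
Proof.
case/lastP: w => // w i; rewrite walk_rcons => E.
have [|v [u [wvu _]]] := @walk_valid w; first by move=> wd; rewrite wd in E.
by have := @step_not_root v u i; rewrite -wvu E.
Qed.

Lemma walk_inj w1 w2 : walk w1 = walk w2 -> walk w1 <> FDead n -> w1 = w2.
Proof.
have nil_walk w : walk [::] = walk w -> w = [::].
  by have [a ta] := tree_root t_tree; rewrite /walk /= => /esym /walk_eq_nil.
elim/last_ind: w1 w2 => [|w1 i IH] w2; first by move/nil_walk.
case/lastP: w2 => [|w2 i']; first by move/esym/nil_walk.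
rewrite !walk_rcons => E live.
have [|v [u [wvu Vvu]]] := @walk_valid w1; first by move=> wd; rewrite wd in live.
have [|v' [u' [wvu' _]]] := @walk_valid w2; first by move=> wd; rewrite E wd in live.
rewrite wvu wvu' in E live; have [vv' uu' ii'] := step_inj E live; subst.
by rewrite (IH w2) ?wvu ?wvu' //; apply: valid_state_live Vvu.
Qed.

Lemma foldl_step_inside v a u r : t v = Some (inl a) ->
  (exists g, phi_sing a (u ++ r) = Some (inl g)) ->
  foldl step (FInside n v u) r = FInside n v (u ++ r).
Proof.
move=> tv; elim/last_ind: r => [|r i IH]; first by rewrite cats0.
rewrite -rcons_cat foldl_rcons => -[g uri].
have [b ur _] : exists2 b, phi_sing a (u ++ r) = Some (inl b) & i < arG b.
  by apply: (tree_rcons_parent (phi_sing_tree a)); rewrite uri.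
by rewrite IH ?step_inside ?tv ?uri //; exists b.
Qed.

Lemma foldl_step_down v a d : t v = Some (inl a) -> t (v ++ d) <> None -> alive (v ++ d) ->
  exists r, foldl step (FInside n v [::]) r = state_at (v ++ d) [::].
Proof.
move=> tv; elim/last_ind: d => [|d j IH]; first by exists [::]; rewrite cats0 /state_at tv.
rewrite -rcons_cat => vdj Avdj.
have [b vdb jb] := tree_rcons_parent t_tree vdj.
have [||r Er] := IH; first by rewrite vdb.
  by apply: alive_prefix Avdj; apply: prefix_rcons.
have [p [k [kj pk]]] := Avdj (v ++ d) j (prefix_refl _) b vdb.
case/lastP: p pk => [|p i] pk; first by have [g] := phi_sing_root b; rewrite pk.
have [c pc _] : exists2 c, phi_sing b p = Some (inl c) & i < arG c.
  by apply: (tree_rcons_parent (phi_sing_tree b)); rewrite pk.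
exists (r ++ rcons p i); rewrite foldl_cat Er /state_at vdb foldl_rcons.
by rewrite (foldl_step_inside (u := [::]) vdb) ?step_inside ?vdb //= ?pk ?kj //; exists c.
Qed.

Lemma foldl_step_valid v a d u : t v = Some (inl a) -> valid (v ++ d) u ->
  exists r, foldl step (FInside n v [::]) r = state_at (v ++ d) u.
Proof.
move=> tv Vu; have [r Er] := foldl_step_down tv (valid_dom Vu) (proj1 Vu).
move: Vu Er => [_]; rewrite /state_at; case vd: (t (v ++ d)) => [[b|m]|] //.
  move=> [g ug] Er; exists (r ++ u); rewrite foldl_cat Er.
  by rewrite (foldl_step_inside (u := [::]) vd) //; exists g.
by move=> _ Er; exists r.
Qed.

Lemma walk_onto v u : valid v u -> exists w, walk w = state_at v u.
Proof.
have [a ta] := tree_root t_tree.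
by move/(foldl_step_valid (v := [::]) ta) => [r Er]; exists r; rewrite /walk.
Qed.

Lemma flat_Tphi_state w v u : walk w = state_at v u -> valid v u ->
  flat (Tphi t) w =
  match t v with
  | Some (inl a) => if phi_sing a u is Some (inl g) then Some (inl g) else None
  | Some (inr m) => Some (inr m)
  | None => None
  end.
Proof.
rewrite /flat -/step -/(walk w) => -> [_]; rewrite /state_at /Tphi /Tmap /Tsing.
by case tv: (t v) => [[a|m]|] //; rewrite tv.
Qed.

Lemma flat_Tphi_dom w : flat (Tphi t) w <> None <-> walk w <> FDead n.
Proof.
split=> [+ wd | /walk_valid [v [u [wvu Vvu]]]]; first by rewrite /flat -/step -/(walk w) wd.
rewrite (flat_Tphi_state wvu Vvu); case: Vvu => _.
by case: (t v) => [[a|m]|] // [g ->].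
Qed.

Definition below v u v' u' :=
  (v' = v /\ prefix u u') \/
  exists a (j : 'I_(arS a)) p, [/\ t v = Some (inl a), prefix (rcons v j) v',
                                   phi_sing a p = Some (inr j) & prefix u p].

Definition state_below v u Z :=
  Z = FDead n \/ exists v' u', [/\ Z = state_at v' u', valid v' u' & below v u v' u'].

Lemma state_below_step v u Z i : state_below v u Z -> state_below v u (step Z i).
Proof.
case=> [-> | [v' [u' [-> Vvu' Bvu']]]]; first by left.
case tv': (t v') => [[a|m]|]; last by case: Vvu' => _; rewrite tv'.
2: by left; rewrite /state_at tv'.
rewrite {1}/state_at tv' step_inside tv'.
case ui: (phi_sing a (rcons u' i)) => [[g|j]|]; last by left.
  right; exists v', (rcons u' i); split; first by rewrite /state_at tv'.
    by split; [case: Vvu' | rewrite tv'; exists g].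
  case: Bvu' => [[-> uu'] | ]; last by right.
  by left; split=> //; apply: prefix_trans uu' (prefix_rcons _ _).
case E: (state_at (rcons v' j) [::]) => [v3 u3|m|]; last by left.
all: right; exists (rcons v' j), [::]; split=> //.
all: try by apply: valid_rcons_var tv' Vvu' ui _; rewrite E.
all: right; case: Bvu' => [[vv' uu'] | [a0 [j0 [p [tv0 vj0 pj0 up]]]]].
1,3: subst v'; exists a, j, (rcons u' i).
1,2: by split; rewrite ?prefix_refl //; apply: prefix_trans uu' (prefix_rcons _ _).
all: by exists a0, j0, p; split=> //; apply: prefix_trans vj0 (prefix_rcons _ _).
Qed.

Lemma state_below_foldl v u Z r : state_below v u Z -> state_below v u (foldl step Z r).
Proof. by elim: r Z => //= i r IH Z /(state_below_step i) /IH. Qed.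

Lemma below_of_reach v u v' u' r : valid v u -> valid v' u' ->
  foldl step (state_at v u) r = state_at v' u' -> below v u v' u'.
Proof.
move=> Vvu Vvu'.
case tv: (t v) => [[a|m]|]; last by case: Vvu => _; rewrite tv.
  have : state_below v u (foldl step (state_at v u) r).
    apply: state_below_foldl; right.
    by exists v, u; split=> //; left; rewrite prefix_refl.
  move=> + E; rewrite E => -[/(valid_state_live Vvu') // | [v2 [u2 [E2 V2 B2]]]].
  by have [-> ->] := state_at_inj Vvu' V2 E2.
case: r => [|i r] /= E; first by have [-> ->] := state_at_inj Vvu Vvu' E; left; rewrite prefix_refl.
by move: E; rewrite {1}/state_at tv step_dead // foldl_step_dead => /esym /(valid_state_live Vvu').
Qed.

Lemma reach_exit v a u (j : 'I_(arS a)) p : t v = Some (inl a) -> valid v u ->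
  phi_sing a p = Some (inr j) -> prefix u p ->
  exists r, foldl step (state_at v u) r = state_at (rcons v j) [::].
Proof.
move=> tv [_]; rewrite /state_at tv => -[g ug] pj.
case/lastP: p pj => [|p i] pj; first by have [g'] := phi_sing_root a; rewrite pj.
case/prefix_rcons_inv=> [up | /prefixP [r pur]]; first by move: ug; rewrite up pj.
subst p.
have [b pb _] : exists2 b, phi_sing a (u ++ r) = Some (inl b) & i < arG b.
  by apply: (tree_rcons_parent (phi_sing_tree a)); rewrite pj.
exists (rcons r i); rewrite foldl_rcons (foldl_step_inside tv); last by exists b.
by rewrite step_inside tv pj.
Qed.

Lemma reach_of_below v u v' u' : valid v u -> valid v' u' -> below v u v' u' ->
  exists r, foldl step (state_at v u) r = state_at v' u'.
Proof.
move=> Vvu Vvu' [[vv' /prefixP [r uu']] | [a [j [p [tv vjv' pj up]]]]].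
  subst v' u'; move: Vvu Vvu' => [_ Lu] [_ Lur]; rewrite /state_at.
  case tv: (t v) => [[a|m]|] in Lu Lur *; last by [].
    by exists r; rewrite (foldl_step_inside tv Lur).
  by exists [::].
have [r1 E1] := reach_exit tv Vvu pj up.
have vj : t (rcons v j) <> None := tree_prefix_closed t_tree (valid_dom Vvu') vjv'.
case tvj: (t (rcons v j)) => [[b|m]|] //.
  move/prefixP: vjv' Vvu' => [d ->] /(foldl_step_valid tvj) [r2 E2].
  by exists (r1 ++ r2); rewrite foldl_cat E1 /state_at tvj.
have vjv : rcons v j = v' := tree_var_leaf t_tree tvj vjv' (valid_dom Vvu').
by move: Vvu' E1; rewrite -vjv => -[_]; rewrite tvj => ->; exists r1.
Qed.

Section TwoAddresses.
Variables (w1 w2 v1 u1 v2 u2 : seq nat).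
Hypotheses (wvu1 : walk w1 = state_at v1 u1) (wvu2 : walk w2 = state_at v2 u2).
Hypotheses (Vvu1 : valid v1 u1) (Vvu2 : valid v2 u2).

Lemma walk_inj_state w : walk w = state_at v2 u2 -> w = w2.
Proof. by move=> E; apply: walk_inj; rewrite E ?wvu2 //; apply: valid_state_live Vvu2. Qed.

Lemma addr_eq : w1 = w2 <-> v1 = v2 /\ u1 = u2.
Proof.
split=> [w12 | [v12 u12]]; last by apply: walk_inj_state; rewrite wvu1 v12 u12.
by apply: state_at_inj; rewrite // -wvu1 -wvu2 w12.
Qed.

Lemma addr_prefix : prefix w1 w2 <-> below v1 u1 v2 u2.
Proof.
split=> [/prefixP [r w12] | /(reach_of_below Vvu1 Vvu2) [r E]].
  by apply: (below_of_reach (r := r)); rewrite // -wvu1 -wvu2 w12 walk_cat.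
by apply/prefixP; exists r; apply/esym/walk_inj_state; rewrite walk_cat wvu1.
Qed.

Lemma addr_succ i : w2 = rcons w1 i <->
  exists2 a, t v1 = Some (inl a) &
    match phi_sing a (rcons u1 i) with
    | Some (inl _) => v2 = v1 /\ u2 = rcons u1 i
    | Some (inr j) => v2 = rcons v1 j /\ u2 = [::]
    | None => False
    end.
Proof.
have step_succ : w2 = rcons w1 i <-> step (state_at v1 u1) i = state_at v2 u2.
  split=> [w12 | E]; first by rewrite -wvu1 -wvu2 w12 walk_rcons.
  by apply/esym/walk_inj_state; rewrite walk_rcons wvu1.
rewrite step_succ; have live2 := valid_state_live Vvu2.
case tv1: (t v1) => [[a|m]|]; rewrite {1}/state_at tv1; last 2 first.
- by rewrite step_dead //; split=> [/esym // | [b]].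
- by rewrite step_dead //; split=> [/esym // | [b]].
rewrite step_inside tv1; split=> [E | [b [<-]]]; last first.
  case: (phi_sing a _) => [[g|j]|] // [-> ->] //; by rewrite /state_at tv1.
exists a => //; move: E; case ui: (phi_sing a (rcons u1 i)) => [[g|j]|] E; last first.
- by case: live2.
- have live : state_at (rcons v1 j) [::] <> FDead n by rewrite E.
  by have [-> ->] := state_at_inj (valid_rcons_var tv1 Vvu1 ui live) Vvu2 E.
have V : valid v1 (rcons u1 i) by split; [case: Vvu1 | rewrite tv1; exists g].
have E' : state_at v1 (rcons u1 i) = state_at v2 u2 by rewrite -E /state_at tv1.
by have [-> ->] := state_at_inj V Vvu2 E'.
Qed.

Lemma addr_label g : flat (Tphi t) w1 = Some (inl g) <->
  exists2 a, t v1 = Some (inl a) & phi_sing a u1 = Some (inl g).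
Proof.
rewrite (flat_Tphi_state wvu1 Vvu1).
case: (t v1) => [[a|m]|]; [split=> [|[b [<-] ->] //] | by split=> // [[b]] ..].
by case E: (phi_sing a u1) => [[g'|j]|] // [<-]; exists a.
Qed.

Lemma addr_var m : flat (Tphi t) w1 = Some (inr m) <-> t v1 = Some (inr m).
Proof.
rewrite (flat_Tphi_state wvu1 Vvu1).
case: (t v1) => [[a|m']|]; [|by split=> -[->] | by []].
by case: (phi_sing a u1) => [[g|j]|].
Qed.

Lemma addr_nil : w1 = [::] <-> v1 = [::] /\ u1 = [::].
Proof.
split=> [w1_nil | [v1_nil u1_nil]].
  by apply: (state_at_inj Vvu1 valid_nil); rewrite -wvu1 w1_nil walk_nil.
apply: walk_inj; first by rewrite wvu1 walk_nil v1_nil u1_nil.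
by rewrite wvu1; apply: valid_state_live Vvu1.
Qed.

End TwoAddresses.

End Addresses.

(** * Atomic facts of [phi t] from those of [t] *)

Section Decoding.
Variables (N M B : nat).
Hypothesis ar_lt_M : forall a, arS a < M.

Definition fo_below_child (j x y : nat) : fo Sigma n :=
  FEx N (fconj (FSucc Sigma n j x N) (FLe Sigma n N y)).

(* The bound variables N and N.+1 avoid the free variables x < N. *)
Definition fo_dead (x : nat) : fo Sigma n :=
  FEx N (bigdisj [seq fconj (FLab n p.1 N)
                         (FEx N.+1 (fconj (FSucc Sigma n p.2 N N.+1) (FLe Sigma n N.+1 x)))
               | p : Sigma * 'I_M <- enum {: Sigma * 'I_M} & ~~ `[< occurs p.1 p.2 >]]).

Definition sigma_index : finType := (atom_index Sigma n N M + ('I_M * 'I_N * 'I_N + 'I_N))%type.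

Definition sigma_query (i : sigma_index) : fo Sigma n :=
  match i with
  | inl i => atom_query i
  | inr (inl (j, x, y)) => fo_below_child j x y
  | inr (inr x) => fneg (fo_dead x)
  end.

Lemma fv_lt_sigma_query i : fv_lt N (sigma_query i).
Proof.
have lt_N1 (x : 'I_N) : x < N.+1 := ltnW (ltn_ord x).
case: i => [i | [[[j x] y] | x]]; first exact: fv_lt_atom_query.
  by apply: fv_lt_ex; apply: fv_lt_conj => z /= /orP [] /eqP ->.
apply/fv_lt_neg/fv_lt_ex/fv_lt_bigdisj => p.
apply: fv_lt_conj => [z /eqP -> // | ]; apply: fv_lt_ex.
by apply: fv_lt_conj => z /= /orP [] /eqP -> //; apply: leqW.
Qed.

Local Notation ieq x y := (inl (inl (inl (inl (inl (inl (x, y)))))) : sigma_index).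
Local Notation isucc j x y := (inl (inl (inl (inl (inr (j, x, y))))) : sigma_index).
Local Notation ilab x a := (inl (inl (inl (inr (x, a)))) : sigma_index).
Local Notation ivar x m := (inl (inl (inr (x, m))) : sigma_index).
Local Notation iroot x := (inl (inr x) : sigma_index).
Local Notation ichild j x y := (inr (inl (j, x, y)) : sigma_index).

(* F is meant to be fun k => sat t e (sigma_query k).  The positions uu inside the label
   trees are kept as they are: the label trees may be infinite, so they cannot be part of a
   finite type. *)
Definition decode (F : sigma_index -> Prop) (uu : nat -> seq nat)
    (i : atom_index Gamma n N B) : Prop :=
  let widen a (j : 'I_(arS a)) : 'I_M := widen_ord (ltnW (ar_lt_M a)) j in
  match i with
  | inl (inl (inl (inl (inl (x, y))))) => F (ieq x y) /\ uu x = uu y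
  | inl (inl (inl (inl (inr (x, y))))) =>
      (F (ieq y x) /\ prefix (uu x) (uu y)) \/
      exists a (j : 'I_(arS a)) p, [/\ F (ilab x a), F (ichild (widen a j) x y),
                                      phi_sing a p = Some (inr j) & prefix (uu x) p]
  | inl (inl (inl (inr (i, x, y)))) =>
      exists2 a, F (ilab x a) &
        match phi_sing a (rcons (uu x) i) with
        | Some (inl _) => F (ieq y x) /\ uu y = rcons (uu x) i
        | Some (inr j) => F (isucc (widen a j) x y) /\ uu y = [::]
        | None => False
        end
  | inl (inl (inr (x, g))) => exists2 a, F (ilab x a) & phi_sing a (uu x) = Some (inl g)
  | inl (inr (x, m)) => F (ivar x m)
  | inr x => F (iroot x) /\ uu x = [::]
  end.

Section DecodingTree.
Variables (t : rtree Sigma n) (t_tree : is_tree arS t).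

Lemma sat_below_child e j x y : x < N -> y < N -> t (e y) <> None ->
  sat t e (fo_below_child j x y) <-> prefix (rcons (e x) j) (e y).
Proof.
move=> xN yN ty; rewrite /fo_below_child sat_ex.
have [xN' yN'] : (x == N) = false /\ (y == N) = false by rewrite !ltn_eqF.
split=> [[v _ /sat_conj []] | xjy]; first by rewrite /= /upd eqxx xN' yN' => <-.
exists (rcons (e x) j); first by apply: (tree_prefix_closed t_tree ty).
by apply/sat_conj; rewrite /= /upd eqxx xN' yN'.
Qed.

Lemma sat_alive e x : x < N -> t (e x) <> None ->
  sat t e (fneg (fo_dead x)) <-> alive t (e x).
Proof.
move=> xN tx; have [xN' xN1] : (x == N) = false /\ (x == N.+1) = false.
  by rewrite !ltn_eqF // ltnW.
rewrite /fo_dead; split=> [not_dead v0 j v0jx a tv0 | Ax /sat_ex [v0 _ /sat_bigdisj [[a k]]]].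
  apply: contrapT => not_occ; apply: not_dead; apply/sat_ex; exists v0; first by rewrite tv0.
  have v0j : t (rcons v0 j) <> None by apply: (tree_prefix_closed t_tree tx).
  have [b] := tree_rcons_parent t_tree v0j; rewrite tv0 => -[<-] ja.
  apply/sat_bigdisj; exists (a, Ordinal (ltn_trans ja (ar_lt_M a))).
    by rewrite mem_filter mem_enum andbT; apply/asboolPn.
  apply/sat_conj; split; first by rewrite /= /upd eqxx.
  apply/sat_ex; exists (rcons v0 j) => //; apply/sat_conj.
  by rewrite /= /upd !eqxx ?(ltn_eqF (ltnSn N)) ?xN' ?xN1.
rewrite mem_filter => /andP [/asboolPn not_occ _] /sat_conj [tv0 /sat_ex [v1 _ /sat_conj []]].
move: tv0; rewrite /= /upd !eqxx ?(ltn_eqF (ltnSn N)) ?xN' ?xN1 => tv0 -> v0kx.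
by apply: not_occ; apply: Ax v0kx a tv0.
Qed.

Definition tracks (e uu w : nat -> seq nat) :=
  forall x, x < N -> walk t (w x) = state_at t (e x) (uu x) /\ valid t (e x) (uu x).

Lemma sat_decode e uu w i : tracks e uu w ->
  sat (flat (Tphi t)) w (atom_query i) <-> decode (fun k => sat t e (sigma_query k)) uu i.
Proof.
move=> tr; have tr' (x : 'I_N) := tr x (ltn_ord x).
case: i => [[[[[[x y]|[x y]]|[[i x] y]]|[x g]]|[x m]]|x] /=.
- have [[wx Vx] [wy Vy]] := (tr' x, tr' y); exact: (addr_eq t_tree wx wy Vx Vy).
- have [[wx Vx] [wy Vy]] := (tr' x, tr' y); rewrite (addr_prefix t_tree wx wy Vx Vy).
  split=> [[[-> xy] | [a [j [p [tx jxy pj up]]]]] | [[yx xy] | [a [j [p [tx jxy pj up]]]]]].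
  + by left.
  + right; exists a, j, p; split=> //.
    by apply/(sat_below_child _ (ltn_ord x) (ltn_ord y) (valid_dom Vy)).
  + by left.
  + right; exists a, j, p; split=> //.
    by move/(sat_below_child _ (ltn_ord x) (ltn_ord y) (valid_dom Vy)): jxy.
- have [[wx Vx] [wy Vy]] := (tr' x, tr' y); rewrite (addr_succ t_tree wx wy Vx Vy).
  by split=> -[a tx E]; exists a => //; move: E; case: (phi_sing a _) => [[]|].
- have [wx Vx] := tr' x; exact: (addr_label wx Vx).
- have [wx Vx] := tr' x; exact: (addr_var wx Vx).
- have [wx Vx] := tr' x; exact: (addr_nil t_tree wx Vx).
Qed.

End DecodingTree.

Lemma valid_transfer t t' e e' (x : 'I_N) u : is_tree arS t -> is_tree arS t' ->
  atp sigma_query t e = atp sigma_query t' e' ->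
  valid t (e x) u -> t' (e' x) <> None -> valid t' (e' x) u.
Proof.
move=> tt tt' /atp_sat_iff fact Vxu tx'; split.
  apply/(sat_alive tt' (ltn_ord x) tx')/(fact (inr (inr x))).
  by apply/(sat_alive tt (ltn_ord x) (valid_dom Vxu)); case: Vxu.
case: Vxu => _; case tx: (t (e x)) => [[a|m]|] //.
  by have /(fact (ilab x a)) /= -> := tx.
by have /(fact (ivar x m)) /= -> := tx.
Qed.

Lemma tracks_upd t e uu w (x : 'I_N) v u w0 : tracks t e uu w ->
  walk t w0 = state_at t v u -> valid t v u ->
  tracks t (upd e x v) (upd uu x u) (upd w x w0).
Proof. by move=> tr E V y yN; rewrite /upd; case: eqP => _; [split | apply: tr]. Qed.

Local Notation sigma_tp t := (tp sigma_query N t).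
Local Notation gamma_tp t := (tp (@atom_query Gamma n N B) N (flat (Tphi t))).

Lemma atp_flat_Tphi t t' e e' uu w w' : is_tree arS t -> is_tree arS t' ->
  tracks t e uu w -> tracks t' e' uu w' ->
  atp sigma_query t e = atp sigma_query t' e' ->
  atp (@atom_query Gamma n N B) (flat (Tphi t)) w =
  atp (@atom_query Gamma n N B) (flat (Tphi t')) w'.
Proof.
move=> tt tt' tr tr' /atp_sat_eq facts; apply/ffunP => i; rewrite !ffunE.
by apply: asbool_equiv_eq; rewrite (sat_decode tt _ tr) (sat_decode tt' _ tr') facts.
Qed.

Lemma gamma_tp_eq q t t' e e' uu w w' : is_tree arS t -> is_tree arS t' ->
  tracks t e uu w -> tracks t' e' uu w' ->
  sigma_tp t q e = sigma_tp t' q e' -> gamma_tp t q w = gamma_tp t' q w'.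
Proof.
elim: q t t' e e' uu w w' => [|q IH] t t' e e' uu w w' tt tt' tr tr' E.
  exact: atp_flat_Tphi tt tt' tr tr' E.
have ext t1 t1' e1 e1' w1 w1' (x : 'I_N) sg : is_tree arS t1 -> is_tree arS t1' ->
    tracks t1 e1 uu w1 -> tracks t1' e1' uu w1' -> sigma_tp t1 q.+1 e1 = sigma_tp t1' q.+1 e1' ->
    (exists2 w0, flat (Tphi t1) w0 <> None & gamma_tp t1 q (upd w1 x w0) = sg) ->
    (exists2 w0, flat (Tphi t1') w0 <> None & gamma_tp t1' q (upd w1' x w0) = sg).
  move=> tt1 tt1' tr1 tr1' E1 [w0 /(flat_Tphi_dom tt1) live <-].
  have [v0 [u0 [wvu0 Vvu0]]] := walk_valid tt1 live.
  have [v0' tv0' Ev0] := tp_back_forth x E1 (valid_dom Vvu0).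
  have Vvu0' : valid t1' v0' u0.
    have := congr1 (@qtype_atom _ _ _) Ev0; rewrite !tp_atom => /esym Ea.
    by have := valid_transfer (x := x) (u := u0) tt1 tt1' Ea; rewrite /upd eqxx; apply.
  have [w0' wvu0'] := walk_onto tt1' Vvu0'.
  exists w0'; first by apply/(flat_Tphi_dom tt1'); rewrite wvu0'; apply: valid_state_live Vvu0'.
  apply/esym/(IH _ _ (upd e1 x v0) (upd e1' x v0') (upd uu x u0)) => //.
  - exact: tracks_upd.
  - exact: tracks_upd.
congr pair; first exact: atp_flat_Tphi tt tt' tr tr' (congr1 (@qtype_atom _ _ _) E).
apply/ffunP => x; rewrite !ffunE; apply/setP => sg; rewrite !inE.
by apply: asbool_equiv_eq; split; [apply: ext tt tt' tr tr' E | apply: ext tt' tt tr' tr (esym E)].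
Qed.

Lemma tracks_nil t : is_tree arS t -> tracks t (fun=> [::]) (fun=> [::]) (fun=> [::]).
Proof. by move=> tt x _; split; [apply: walk_nil | apply: valid_nil]. Qed.

Lemma sat_phi_tp_eq (f : fo Gamma n) (t t' : Tn arS n) :
  talg_morph phi -> fo_bound f < N -> fo_bound f < B ->
  sigma_tp (sval t) (qrank f) (fun=> [::]) = sigma_tp (sval t') (qrank f) (fun=> [::]) ->
  sat (sval (phi t)) (fun=> [::]) f <-> sat (sval (phi t')) (fun=> [::]) f.
Proof.
move=> morph fN fB E; rewrite !phi_flat //.
apply: (sat_tp_eq (over_atom_queries fN fB) (leqnn _)).
have [tt tt'] := (proj2_sig t, proj2_sig t').
exact: gamma_tp_eq tt tt' (tracks_nil tt) (tracks_nil tt') E.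
Qed.

End Decoding.
End Walk.

Theorem proposition10p6 (Sigma Gamma : finType) (arS : Sigma -> nat) (arG : Gamma -> nat)
    (phi : forall k, Tn arS k -> Tn arG k) :
  talg_morph phi ->
  forall (n : nat) (K : Tn arG n -> Prop),
    fo_definable K -> fo_definable (fun t : Tn arS n => K (phi n t)).
Proof.
move=> morph n K [f [_ f_K]].
pose N := (fo_bound f).+1.
pose M := (\max_(a : Sigma) arS a).+1.
have ar_lt_M a : arS a < M by rewrite ltnS; apply: leq_bigmax.
apply: (fo_definable_of_tp (query := @sigma_query _ _ _ _ phi n N M) (q := qrank f)).
  exact: fv_lt_sigma_query.
move=> t t' E; rewrite !f_K.
exact: (iffLR (sat_phi_tp_eq ar_lt_M morph (ltnSn _) (ltnSn _) E)).
Qed.
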